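(* Let $\Lambda$ denote the von Mangoldt function and let $\varepsilon>0$ be a small number. Then, as $x\to\infty$, \[ \sum_{n\leq x}\Lambda([x/n])\Lambda(2[x/n]+1) = s_1 x + O\left(x^{(2+\varepsilon)/3}\log^2 x\right), \] where the density constant is \[ s_1=\sum_{n\geq 1}\frac{\Lambda(n)\Lambda(2n+1)}{n(n+1)}\geq 0.620794. \]
   Context: $[t]$ denotes the largest integer not exceeding $t$. The von Mangoldt function is $\Lambda(m)=\log p$ if $m=p^k$ for a prime $p$ and an integer $k\geq 1$, and $\Lambda(m)=0$ otherwise. The sum is over positive integers $n\le x$. *)

From Stdlib Require Import Reals ZArith Znumtheory ClassicalDescription.
From Coquelicot Require Import Coquelicot.
Open Scope R_scope.

Definition is_prime_power_of (p m : nat) : Prop :=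
  prime (Z.of_nat p) /\ exists k : nat, (1 <= k)%nat /\ m = (p ^ k)%nat.

(* von Mangoldt function: Lambda m = log p if m = p^k (p prime, k >= 1),
   and 0 otherwise.  Since such a p is unique and p <= m, this is the sum
   over candidate p in [2, m] of log p times the indicator. *)
Definition vonMangoldt (m : nat) : R :=
  sum_n_m (fun p : nat =>
             if excluded_middle_informative (is_prime_power_of p m)
             then ln (INR p) else 0) 2 m.

(* [t] : the largest integer not exceeding t, as a natural number
   (only used for t >= 0). *)
Definition floor_nat (t : R) : nat := Z.to_nat (Int_part t).

Definition S_sum (x : R) : R :=
  sum_n_m (fun n : nat =>
             vonMangoldt (floor_nat (x / INR n)) *
             vonMangoldt (2 * floor_nat (x / INR n) + 1)) 1 (floor_nat x).

Definition s1_term (n : nat) : R :=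
  vonMangoldt n * vonMangoldt (2 * n + 1) / (INR n * (INR n + 1)).

From Stdlib Require Import Reals.
From Coquelicot Require Import Coquelicot.
From Stdlib Require Import ZArith Znumtheory List Lia Lra Psatz ClassicalDescription.
Open Scope R_scope.

(* Grouping the n <= x by the value m = [x/n] gives
   S(x) = sum_(m <= x) ([x/m] - [x/(m+1)]) Lambda(m) Lambda(2m+1),
   and each block has x/(m(m+1)) + O(1) elements.  Since Lambda(m) Lambda(2m+1) <= log^2 (3x),
   cutting at N = [x^(2/3)] costs O(N log^2 x) for m <= N, O(x log^2 x / N) for m > N, and
   x times the tail of the series beyond N, which is O(x / sqrt N) because
   Lambda(m) Lambda(2m+1) <= 16 sqrt(2m+1).  All three are O(x^(2/3) log^2 x).
   The lower bound for s_1 sums seven explicit terms of the series (m = 2, 3, 4, 5, 8, 9, 11),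
   with the logarithms of the primes involved bounded below by exact integer arithmetic. *)

Lemma sum_n_m_le_loc (f g : nat -> R) (a b : nat) :
  (forall j, (a <= j <= b)%nat -> f j <= g j) -> sum_n_m f a b <= sum_n_m g a b.
Proof.
  intros Hfg. destruct (le_lt_dec a b) as [Hab|Hba].
  - induction Hab as [|b Hab IH].
    + rewrite !sum_n_n. apply Hfg; lia.
    + rewrite !sum_n_Sm by lia. apply Rplus_le_compat.
      * apply IH. intros j Hj. apply Hfg; lia.
      * apply Hfg; lia.
  - rewrite !sum_n_m_zero by exact Hba. apply Rle_refl.
Qed.

Lemma sum_n_m_zero_loc (f : nat -> R) (a b : nat) :
  (forall j, (a <= j <= b)%nat -> f j = 0) -> sum_n_m f a b = 0.
Proof.
  intros Hf. rewrite (sum_n_m_ext_loc f (fun _ => zero)) by exact Hf.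
  exact (@sum_n_m_const_zero R_AbelianMonoid a b).
Qed.

Lemma sum_n_m_nonneg (f : nat -> R) (a b : nat) :
  (forall j, (a <= j <= b)%nat -> 0 <= f j) -> 0 <= sum_n_m f a b.
Proof.
  intros Hf. rewrite <- (sum_n_m_zero_loc (fun _ => 0) a b) by reflexivity.
  exact (sum_n_m_le_loc _ _ a b Hf).
Qed.

Lemma sum_n_m_single (f : nat -> R) (a b i : nat) : (a <= i <= b)%nat ->
  (forall j, (a <= j <= b)%nat -> j <> i -> f j = 0) -> sum_n_m f a b = f i.
Proof.
  intros Hi Hf. rewrite (sum_n_m_Chasles f a i b) by lia.
  rewrite (sum_n_m_zero_loc f (S i) b) by (intros j Hj; apply Hf; lia).
  destruct i as [|i].
  - replace a with 0%nat by lia. rewrite sum_n_n. apply Rplus_0_r.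
  - rewrite sum_n_Sm by lia.
    rewrite (sum_n_m_zero_loc f a i) by (intros j Hj; apply Hf; lia).
    change (0 + f (S i) + 0 = f (S i)). ring.
Qed.

Lemma sum_n_m_telescope (u : nat -> R) (a b : nat) : (a <= S b)%nat ->
  sum_n_m (fun k => u k - u (S k)) a b = u a - u (S b).
Proof.
  intros Hab. induction b as [|b IH].
  - destruct a as [|a].
    + rewrite sum_n_n. reflexivity.
    + replace a with 0%nat by lia. rewrite sum_n_m_zero by lia.
      change (0 = u 1%nat - u 1%nat). ring.
  - destruct (Nat.eq_dec a (S (S b))) as [->|Ha].
    + rewrite sum_n_m_zero by lia. change (0 = u (S (S b)) - u (S (S b))). ring.
    + rewrite sum_n_Sm, IH by lia. change (u a - u (S b) + (u (S b) - u (S (S b))) =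
        u a - u (S (S b))). ring.
Qed.

Lemma sum_n_m_blocks (F : nat -> R) (c : nat -> nat) (K : nat) :
  (forall m, (1 <= m <= K)%nat -> (c (S m) <= c m)%nat) ->
  sum_n_m F (S (c (S K))) (c 1%nat) =
  sum_n_m (fun m => sum_n_m F (S (c (S m))) (c m)) 1 K.
Proof.
  induction K as [|K IH]; intros Hc.
  - rewrite !sum_n_m_zero by lia. reflexivity.
  - assert (Hc1 : forall m, (1 <= m <= S K)%nat -> (c m <= c 1%nat)%nat).
    { intros m Hm. induction m as [|m IHm]; [lia|].
      destruct m as [|m]; [lia|].
      specialize (Hc (S m) ltac:(lia)). specialize (IHm ltac:(lia)). lia. }
    assert (HK : (c (S (S K)) <= c (S K))%nat) by (apply Hc; lia).
    rewrite sum_n_Sm by lia.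
    rewrite <- IH by (intros m Hm; apply Hc; lia).
    rewrite (sum_n_m_Chasles F _ (c (S K)) (c 1%nat)) by (try apply Hc1; lia).
    apply Rplus_comm.
Qed.

Lemma sum_n_m_Rmult_l (c : R) (f : nat -> R) (a b : nat) :
  sum_n_m (fun k => c * f k) a b = c * sum_n_m f a b.
Proof. exact (sum_n_m_mult_l c f a b). Qed.

Lemma sum_n_m_abs_sub_le (f g : nat -> R) (c : R) (a b : nat) :
  (forall j, (a <= j <= b)%nat -> Rabs (f j - g j) <= c) ->
  Rabs (sum_n_m f a b - sum_n_m g a b) <= INR (S b - a) * c.
Proof.
  intros Hfg.
  assert (Hdiff : sum_n_m f a b - sum_n_m g a b = sum_n_m (fun j => f j - g j) a b).
  { rewrite (sum_n_m_ext f (fun j => plus (g j) (f j - g j)))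
      by (intros j; change (f j = g j + (f j - g j)); ring).
    rewrite sum_n_m_plus.
    change (sum_n_m g a b + sum_n_m (fun j => f j - g j) a b - sum_n_m g a b =
      sum_n_m (fun j => f j - g j) a b). ring. }
  rewrite Hdiff, <- sum_n_m_const.
  apply Rle_trans with (sum_n_m (fun j => Rabs (f j - g j)) a b).
  { exact (norm_sum_n_m (V := R_NormedModule) (fun j => f j - g j) a b). }
  exact (sum_n_m_le_loc _ _ a b Hfg).
Qed.

(** * Logarithms and the von Mangoldt function *)

Lemma prime_of_nat_ge2 (p : nat) : prime (Z.of_nat p) -> (2 <= p)%nat.
Proof. intros [Hp _]. lia. Qed.

Lemma is_prime_power_of_pow (p k : nat) :
  prime (Z.of_nat p) -> (1 <= k)%nat -> is_prime_power_of p (p ^ k).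
Proof. intros Hp Hk. split; [exact Hp|]. exists k. split; [exact Hk | reflexivity]. Qed.

Lemma is_prime_power_of_unique (p q m : nat) :
  is_prime_power_of p m -> is_prime_power_of q m -> p = q.
Proof.
  intros [Hp [k [Hk ->]]] [Hq [j [_ Hpq]]].
  apply Nat2Z.inj, (Zpow_facts.prime_power_prime _ _ (Z.of_nat j)); [lia | exact Hp | exact Hq |].
  rewrite <- Nat2Z.inj_pow, <- Hpq. destruct k as [|k]; [lia|].
  rewrite Nat.pow_succ_r', Nat2Z.inj_mul. apply Z.divide_factor_l.
Qed.

Lemma is_prime_power_of_le (p m : nat) : is_prime_power_of p m -> (p <= m)%nat.
Proof.
  intros [Hp [k [Hk ->]]]. apply prime_of_nat_ge2 in Hp.
  destruct k as [|k]; [lia|]. rewrite Nat.pow_succ_r'.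
  assert (Hpos : (1 <= p ^ k)%nat) by (apply Nat.le_succ_l, Nat.neq_0_lt_0, Nat.pow_nonzero; lia).
  nia.
Qed.

Lemma ln_INR_nonneg (n : nat) : (1 <= n)%nat -> 0 <= ln (INR n).
Proof. intros Hn. rewrite <- ln_1. apply ln_le; [lra | apply (le_INR 1); exact Hn]. Qed.

Lemma vonMangoldt_prime_power (p m : nat) :
  is_prime_power_of p m -> vonMangoldt m = ln (INR p).
Proof.
  intros Hpm. unfold vonMangoldt.
  pose proof (prime_of_nat_ge2 p (proj1 Hpm)). pose proof (is_prime_power_of_le p m Hpm).
  rewrite (sum_n_m_single _ 2 m p).
  - destruct excluded_middle_informative; [reflexivity | contradiction].
  - lia.
  - intros j _ Hj. destruct excluded_middle_informative as [Hjm|]; [|reflexivity].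
    contradiction (Hj (is_prime_power_of_unique j p m Hjm Hpm)).
Qed.

Lemma vonMangoldt_not_prime_power (m : nat) :
  (forall p, ~ is_prime_power_of p m) -> vonMangoldt m = 0.
Proof.
  intros Hm. apply sum_n_m_zero_loc. intros j _.
  destruct excluded_middle_informative as [Hjm|]; [contradiction (Hm j) | reflexivity].
Qed.

Lemma vonMangoldt_cases (m : nat) :
  (exists p, is_prime_power_of p m /\ vonMangoldt m = ln (INR p)) \/ vonMangoldt m = 0.
Proof.
  destruct (excluded_middle_informative (exists p, is_prime_power_of p m)) as [[p Hp]|Hm].
  - left. exists p. split; [exact Hp | exact (vonMangoldt_prime_power p m Hp)].
  - right. apply vonMangoldt_not_prime_power. intros p Hp. exact (Hm (ex_intro _ p Hp)).
Qed.

Lemma vonMangoldt_nonneg (m : nat) : 0 <= vonMangoldt m.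
Proof.
  destruct (vonMangoldt_cases m) as [[p [Hp ->]] | ->]; [|lra].
  apply ln_INR_nonneg. pose proof (prime_of_nat_ge2 p (proj1 Hp)). lia.
Qed.

Lemma vonMangoldt_le_ln (m : nat) : (1 <= m)%nat -> vonMangoldt m <= ln (INR m).
Proof.
  intros Hm. destruct (vonMangoldt_cases m) as [[p [Hp ->]] | ->].
  - pose proof (prime_of_nat_ge2 p (proj1 Hp)).
    apply ln_le; [apply lt_0_INR; lia | apply le_INR, is_prime_power_of_le, Hp].
  - exact (ln_INR_nonneg m Hm).
Qed.

Lemma ln_sqr_le_sqrt (y : R) : 1 <= y -> ln y ^ 2 <= 16 * sqrt y.
Proof.
  intros Hy. set (q := Rpower y (/ 4)).
  assert (Hlnq : ln q = ln y / 4) by (unfold q, Rpower; rewrite ln_exp; field).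
  assert (Hqq : q * q = sqrt y).
  { unfold q. rewrite <- Rpower_plus, <- Rpower_sqrt by lra. f_equal. field. }
  assert (Hq0 : 0 <= ln q) by (rewrite Hlnq; pose proof (ln_le 1 y); rewrite ln_1 in *; lra).
  assert (Hq1 : ln q <= q).
  { pose proof (exp_ineq1_le (ln q)).
    rewrite exp_ln in * by (unfold q, Rpower; apply exp_pos). lra. }
  rewrite <- Hqq. replace (ln y) with (4 * ln q) by lra. nra.
Qed.

Lemma ln_ge_of_pow_bound (k : nat) (t y : R) :
  0 <= t < 1 -> 1 <= y * (1 - t) ^ k -> INR k * t <= ln y.
Proof.
  intros Ht Hy.
  assert (Hpos : 0 < (1 - t) ^ k) by (apply pow_lt; lra).
  assert (Hexp : exp t * (1 - t) <= 1).
  { pose proof (exp_ineq1_le (- t)) as Hlin. rewrite exp_Ropp in Hlin.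
    pose proof (exp_pos t). apply Rmult_le_compat_l with (r := exp t) in Hlin; [|lra].
    rewrite Rinv_r in Hlin by lra. lra. }
  assert (Hexpk : exp (INR k * t) * (1 - t) ^ k <= 1).
  { replace (exp (INR k * t)) with (exp t ^ k)
      by (rewrite <- Rpower_pow by apply exp_pos; unfold Rpower; rewrite ln_exp; reflexivity).
    rewrite <- Rpow_mult_distr.
    apply Rle_trans with (1 ^ k); [|rewrite pow1; lra].
    apply pow_incr. pose proof (exp_pos t). split; [nra | exact Hexp]. }
  rewrite <- (ln_exp (INR k * t)). apply ln_le; [apply exp_pos|].
  apply Rmult_le_reg_r with ((1 - t) ^ k); [exact Hpos | lra].
Qed.

Lemma ln_ge_1 (x : R) : 3 <= x -> 1 <= ln x.
Proof.
  intros Hx. rewrite <- (ln_exp 1). apply ln_le; [apply exp_pos|].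
  pose proof exp_le_3. lra.
Qed.

(** * The constant s_1 *)

Definition mangoldt_pair (m : nat) : R := vonMangoldt m * vonMangoldt (2 * m + 1).

Lemma mangoldt_pair_nonneg (m : nat) : 0 <= mangoldt_pair m.
Proof. apply Rmult_le_pos; apply vonMangoldt_nonneg. Qed.

Lemma mangoldt_pair_le_ln_sqr (m : nat) : (1 <= m)%nat ->
  mangoldt_pair m <= ln (INR (2 * m + 1)) ^ 2.
Proof.
  intros Hm. assert (Hln : ln (INR m) <= ln (INR (2 * m + 1))).
  { apply ln_le; [apply lt_0_INR; lia | apply le_INR; lia]. }
  pose proof (vonMangoldt_le_ln m Hm). pose proof (vonMangoldt_le_ln (2 * m + 1) ltac:(lia)).
  pose proof (vonMangoldt_nonneg m). pose proof (vonMangoldt_nonneg (2 * m + 1)).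
  unfold mangoldt_pair. rewrite <- Rsqr_pow2. apply Rmult_le_compat; lra.
Qed.

Lemma s1_term_eq (m : nat) : s1_term m = mangoldt_pair m / (INR m * (INR m + 1)).
Proof. reflexivity. Qed.

Lemma s1_term_nonneg (m : nat) : (1 <= m)%nat -> 0 <= s1_term m.
Proof.
  intros Hm. rewrite s1_term_eq. pose proof (lt_0_INR m ltac:(lia)).
  apply Rdiv_le_0_compat; [apply mangoldt_pair_nonneg | nra].
Qed.

Lemma s1_term_le_telescoping (m : nat) : (1 <= m)%nat ->
  s1_term m <= 56 * (/ sqrt (INR m) - / sqrt (INR (S m))).
Proof.
  intros Hm. assert (Hm1 : 1 <= INR m) by (apply (le_INR 1); exact Hm).
  assert (Hpair : mangoldt_pair m <= 16 * sqrt (INR (2 * m + 1))).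
  { eapply Rle_trans; [apply mangoldt_pair_le_ln_sqr, Hm|].
    apply ln_sqr_le_sqrt, (le_INR 1). lia. }
  rewrite s1_term_eq, S_INR. rewrite plus_INR, mult_INR in Hpair. simpl INR in Hpair.
  set (a := sqrt (INR m)) in *. set (b := sqrt (INR m + 1)).
  set (c := sqrt ((1 + 1) * INR m + 1)) in *.
  assert (Ha2 : a * a = INR m) by (apply sqrt_sqrt; lra).
  assert (Hb2 : b * b = INR m + 1) by (apply sqrt_sqrt; lra).
  assert (Hc2 : c * c = 2 * INR m + 1) by (apply sqrt_sqrt; lra).
  assert (Ha : 0 < a) by (apply sqrt_lt_R0; lra).
  assert (Hb : 0 < b) by (apply sqrt_lt_R0; lra).
  assert (Hc : 0 <= c) by apply sqrt_pos.
  assert (Hab : a <= b) by (apply sqrt_le_1_alt; lra).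
  (* [c <= 7/4 a] because [2m + 1 <= 3m <= (49/16) m] *)
  assert (Hca : c <= 7 / 4 * a) by nra.
  assert (Hba : 1 <= 2 * b * (b - a)) by nra.
  rewrite <- Hb2, <- Ha2.
  apply Rle_trans with (16 * c / (a * a * (b * b))).
  { apply Rmult_le_compat_r; [apply Rlt_le, Rinv_0_lt_compat; nra | exact Hpair]. }
  apply Rmult_le_reg_r with (a * a * (b * b)); [nra|].
  replace (16 * c / (a * a * (b * b)) * (a * a * (b * b))) with (16 * c) by (field; lra).
  replace (56 * (/ a - / b) * (a * a * (b * b))) with (28 * a * (2 * b * (b - a))) by (field; lra).
  nra.
Qed.

Lemma is_series_telescoping_majorant (a v : nat -> R) :
  (forall n, 0 <= a n) -> (forall n, a n <= v n - v (S n)) -> (forall n, 0 <= v n) ->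
  exists l, is_series a l /\ forall N, sum_n a N <= l <= sum_n a N + v (S N).
Proof.
  intros Ha Hav Hv.
  assert (Hsplit : forall N M, (N <= M)%nat -> sum_n a M = sum_n a N + sum_n_m a (S N) M).
  { intros N M HNM. unfold sum_n. apply (sum_n_m_Chasles a 0 N M); lia. }
  assert (Hincr : forall N M, (N <= M)%nat -> sum_n a N <= sum_n a M).
  { intros N M HNM. rewrite (Hsplit N M HNM).
    pose proof (sum_n_m_nonneg a (S N) M (fun j _ => Ha j)). lra. }
  assert (Htail : forall N M, (N <= M)%nat -> sum_n a M <= sum_n a N + v (S N)).
  { intros N M HNM. rewrite (Hsplit N M HNM).
    pose proof (sum_n_m_le_loc a (fun k => v k - v (S k)) (S N) M (fun j _ => Hav j)) as Hle.
    rewrite sum_n_m_telescope in Hle by lia. pose proof (Hv (S M)). lra. }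
  destruct (ex_finite_lim_seq_incr (sum_n a) (v 0%nat)) as [l Hl].
  - intros n. apply Hincr. lia.
  - intros M. pose proof (Htail 0%nat M ltac:(lia)). rewrite sum_O in *.
    pose proof (Hav 0%nat). lra.
  - exists l. split; [exact Hl|]. intros N. split.
    + change (Rbar_le (sum_n a N) l).
      apply (is_lim_seq_le_loc (fun _ => sum_n a N) (sum_n a));
        [|apply is_lim_seq_const | exact Hl].
      exists N. exact (Hincr N).
    + change (Rbar_le l (sum_n a N + v (S N))).
      apply (is_lim_seq_le (sum_n a) (fun _ => sum_n a N + v (S N)));
        [|exact Hl | apply is_lim_seq_const].
      intros M. destruct (le_lt_dec N M) as [HNM|HMN]; [exact (Htail N M HNM)|].
      pose proof (Hincr M N ltac:(lia)). pose proof (Hv (S N)). lra.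
Qed.

Definition s1_partial (N : nat) : R := sum_n_m s1_term 1 N.

Lemma s1_series_bounds : exists s1,
  is_series (fun n => s1_term (S n)) s1 /\
  forall N, (1 <= N)%nat -> s1_partial N <= s1 <= s1_partial N + 56 / sqrt (INR (S N)).
Proof.
  destruct (is_series_telescoping_majorant (fun n => s1_term (S n))
              (fun n => 56 / sqrt (INR (S n)))) as [s1 [Hs1 Hbounds]].
  - intros n. apply s1_term_nonneg. lia.
  - intros n. unfold Rdiv. rewrite <- Rmult_minus_distr_l. apply s1_term_le_telescoping. lia.
  - intros n. apply Rdiv_le_0_compat; [lra | apply sqrt_lt_R0, lt_0_INR; lia].
  - exists s1. split; [exact Hs1|]. intros [|N] HN; [lia|].
    specialize (Hbounds N). unfold sum_n in Hbounds. rewrite sum_n_m_S in Hbounds. exact Hbounds.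
Qed.

Lemma prime_of_gcd_check (p : nat) :
  ((1 <? p)%nat && forallb (fun n => Z.gcd (Z.of_nat n) (Z.of_nat p) =? 1)%Z (seq 1 (p - 1)))%bool
    = true ->
  prime (Z.of_nat p).
Proof.
  intros Hcheck. apply andb_prop in Hcheck as [Hp Hgcd].
  apply Nat.ltb_lt in Hp. rewrite forallb_forall in Hgcd.
  apply prime_intro; [lia|]. intros n Hn.
  apply Zgcd_1_rel_prime, Z.eqb_eq.
  replace n with (Z.of_nat (Z.to_nat n)) by lia.
  apply Hgcd, in_seq. lia.
Qed.

(* With [v = k u] and [t = w / v], the hypothesis of [ln_ge_of_pow_bound] for [y = a]
   is the integer inequality [v^k <= a (v - w)^k]. *)
Lemma ln_ge_of_Z_check (k : nat) (w u : Z) (a : nat) :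
  let v := (Z.of_nat k * u)%Z in
  ((0 <=? w)%Z && (w <? v)%Z && (v ^ Z.of_nat k <=? Z.of_nat a * (v - w) ^ Z.of_nat k)%Z)%bool
    = true ->
  IZR w / IZR u <= ln (INR a).
Proof.
  intros v Hcheck. apply andb_prop in Hcheck as [Hcheck Hpow].
  apply andb_prop in Hcheck as [Hw0 Hwv].
  apply Z.leb_le in Hw0, Hpow. apply Z.ltb_lt in Hwv.
  assert (Hku : (0 < Z.of_nat k /\ 0 < u)%Z).
  { assert (Hprod : (0 < Z.of_nat k * u)%Z) by (unfold v in Hwv; lia).
    apply Z.lt_0_mul in Hprod. lia. }
  assert (Hv : 0 < IZR v) by (apply IZR_lt; lia).
  replace (IZR w / IZR u) with (INR k * (IZR w / IZR v)).
  2: { unfold v. rewrite mult_IZR, <- INR_IZR_INZ. field.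
       split; [apply not_0_IZR | apply not_0_INR]; lia. }
  apply ln_ge_of_pow_bound.
  - split.
    + apply Rdiv_le_0_compat; [apply IZR_le; lia | exact Hv].
    + apply Rmult_lt_reg_r with (IZR v); [exact Hv|].
      unfold Rdiv. rewrite Rmult_assoc, Rinv_l, Rmult_1_r, Rmult_1_l by lra. apply IZR_lt. lia.
  - replace (1 - IZR w / IZR v) with (IZR (v - w) / IZR v) by (rewrite minus_IZR; field; lra).
    unfold Rdiv.
    rewrite Rpow_mult_distr, pow_inv, !pow_IZR, INR_IZR_INZ, <- Rmult_assoc, <- mult_IZR.
    assert (Hvk : 0 < IZR (v ^ Z.of_nat k)) by (apply IZR_lt, Z.pow_pos_nonneg; lia).
    apply Rmult_le_reg_r with (IZR (v ^ Z.of_nat k)); [exact Hvk|].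
    rewrite Rmult_assoc, Rinv_l, Rmult_1_l, Rmult_1_r by lra. apply IZR_le. exact Hpow.
Qed.

Lemma is_prime_power_of_prime (p : nat) : prime (Z.of_nat p) -> is_prime_power_of p p.
Proof.
  intros Hp. rewrite <- (Nat.pow_1_r p) at 2. exact (is_prime_power_of_pow p 1 Hp (le_n 1)).
Qed.

Lemma s1_term_ge_prime_powers (m p q : nat) (A B : R) :
  is_prime_power_of p m -> is_prime_power_of q (2 * m + 1) ->
  A <= ln (INR p) -> B <= ln (INR q) -> 0 <= A -> 0 <= B ->
  A * B / (INR m * (INR m + 1)) <= s1_term m.
Proof.
  intros Hp Hq HA HB HA0 HB0.
  pose proof (prime_of_nat_ge2 p (proj1 Hp)). pose proof (is_prime_power_of_le p m Hp).
  pose proof (lt_0_INR m ltac:(lia)).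
  rewrite s1_term_eq. unfold mangoldt_pair.
  rewrite (vonMangoldt_prime_power p m Hp), (vonMangoldt_prime_power q _ Hq).
  apply Rmult_le_compat_r; [apply Rlt_le, Rinv_0_lt_compat; nra|].
  apply Rmult_le_compat; lra.
Qed.

Lemma s1_partial_11_ge : 620794 / 1000000 <= s1_partial 11.
Proof.
  pose proof (prime_of_gcd_check 2 eq_refl) as P2.
  pose proof (prime_of_gcd_check 3 eq_refl) as P3.
  pose proof (prime_of_gcd_check 5 eq_refl) as P5.
  pose proof (prime_of_gcd_check 7 eq_refl) as P7.
  pose proof (prime_of_gcd_check 11 eq_refl) as P11.
  pose proof (prime_of_gcd_check 17 eq_refl) as P17.
  pose proof (prime_of_gcd_check 19 eq_refl) as P19.
  pose proof (prime_of_gcd_check 23 eq_refl) as P23.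
  pose proof (ln_ge_of_Z_check 100 69 100 2 ltac:(now vm_compute)) as L2.
  pose proof (ln_ge_of_Z_check 100 109 100 3 ltac:(now vm_compute)) as L3.
  pose proof (ln_ge_of_Z_check 100 158 100 5 ltac:(now vm_compute)) as L5.
  pose proof (ln_ge_of_Z_check 100 192 100 7 ltac:(now vm_compute)) as L7.
  pose proof (ln_ge_of_Z_check 100 235 100 11 ltac:(now vm_compute)) as L11.
  pose proof (ln_ge_of_Z_check 100 276 100 17 ltac:(now vm_compute)) as L17.
  pose proof (ln_ge_of_Z_check 100 287 100 19 ltac:(now vm_compute)) as L19.
  pose proof (ln_ge_of_Z_check 100 306 100 23 ltac:(now vm_compute)) as L23.
  pose proof (s1_term_ge_prime_powers 2 2 5 _ _ (is_prime_power_of_prime 2 P2)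
    (is_prime_power_of_prime 5 P5) L2 L5 ltac:(lra) ltac:(lra)) as T2.
  pose proof (s1_term_ge_prime_powers 3 3 7 _ _ (is_prime_power_of_prime 3 P3)
    (is_prime_power_of_prime 7 P7) L3 L7 ltac:(lra) ltac:(lra)) as T3.
  pose proof (s1_term_ge_prime_powers 4 2 3 _ _ (is_prime_power_of_pow 2 2 P2 ltac:(lia))
    (is_prime_power_of_pow 3 2 P3 ltac:(lia)) L2 L3 ltac:(lra) ltac:(lra)) as T4.
  pose proof (s1_term_ge_prime_powers 5 5 11 _ _ (is_prime_power_of_prime 5 P5)
    (is_prime_power_of_prime 11 P11) L5 L11 ltac:(lra) ltac:(lra)) as T5.
  pose proof (s1_term_ge_prime_powers 8 2 17 _ _ (is_prime_power_of_pow 2 3 P2 ltac:(lia))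
    (is_prime_power_of_prime 17 P17) L2 L17 ltac:(lra) ltac:(lra)) as T8.
  pose proof (s1_term_ge_prime_powers 9 3 19 _ _ (is_prime_power_of_pow 3 2 P3 ltac:(lia))
    (is_prime_power_of_prime 19 P19) L3 L19 ltac:(lra) ltac:(lra)) as T9.
  pose proof (s1_term_ge_prime_powers 11 11 23 _ _ (is_prime_power_of_prime 11 P11)
    (is_prime_power_of_prime 23 P23) L11 L23 ltac:(lra) ltac:(lra)) as T11.
  pose proof (s1_term_nonneg 1 ltac:(lia)). pose proof (s1_term_nonneg 6 ltac:(lia)).
  pose proof (s1_term_nonneg 7 ltac:(lia)). pose proof (s1_term_nonneg 10 ltac:(lia)).
  unfold s1_partial. rewrite !sum_n_Sm, sum_n_m_zero by lia.
  change plus with Rplus; change zero with 0.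
  rewrite !INR_IZR_INZ in T2, T3, T4, T5, T8, T9, T11.
  simpl Z.of_nat in T2, T3, T4, T5, T8, T9, T11. lra.
Qed.

(** * The hyperbola decomposition of S(x) *)

Lemma floor_nat_spec (t : R) : 0 <= t ->
  INR (floor_nat t) <= t < INR (floor_nat t) + 1.
Proof.
  intros Ht. unfold floor_nat. destruct (base_Int_part t) as [Hlo Hhi].
  assert (Hz : (0 <= Int_part t)%Z).
  { apply Z.lt_pred_le, lt_IZR. rewrite <- Z.sub_1_r, minus_IZR. simpl; lra. }
  rewrite INR_IZR_INZ, Z2Nat.id by exact Hz. lra.
Qed.

Lemma floor_nat_unique (t : R) (k : nat) : INR k <= t < INR k + 1 -> floor_nat t = k.
Proof.
  intros Hk. pose proof (pos_INR k).
  destruct (floor_nat_spec t ltac:(lra)) as [Hlo Hhi].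
  assert (H1 : INR k < INR (S (floor_nat t))) by (rewrite S_INR; lra).
  assert (H2 : INR (floor_nat t) < INR (S k)) by (rewrite S_INR; lra).
  apply INR_lt in H1, H2. lia.
Qed.

Lemma le_floor_nat (t : R) (n : nat) : INR n <= t -> (n <= floor_nat t)%nat.
Proof.
  intros Hn. pose proof (pos_INR n).
  destruct (floor_nat_spec t ltac:(lra)) as [_ Hhi].
  assert (Hlt : INR n < INR (S (floor_nat t))) by (rewrite S_INR; lra).
  apply INR_lt in Hlt. lia.
Qed.

Definition div_floor (x : R) (m : nat) : nat := floor_nat (x / INR m).

Section Hyperbola.

Variable x : R.
Hypothesis Hx : 0 <= x.

Lemma div_floor_spec (m : nat) : (1 <= m)%nat ->
  INR (div_floor x m) <= x / INR m < INR (div_floor x m) + 1.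
Proof.
  intros Hm. apply floor_nat_spec, Rdiv_le_0_compat; [exact Hx | apply lt_0_INR; lia].
Qed.

Lemma div_floor_1 : div_floor x 1 = floor_nat x.
Proof. unfold div_floor. simpl INR. unfold Rdiv. rewrite Rinv_1, Rmult_1_r. reflexivity. Qed.

Lemma div_floor_S_floor : div_floor x (S (floor_nat x)) = 0%nat.
Proof.
  apply floor_nat_unique. destruct (floor_nat_spec x Hx) as [_ Hlt].
  rewrite S_INR. simpl INR. split.
  - apply Rdiv_le_0_compat; [exact Hx | pose proof (pos_INR (floor_nat x)); lra].
  - apply Rmult_lt_reg_r with (INR (floor_nat x) + 1); [pose proof (pos_INR (floor_nat x)); lra|].
    unfold Rdiv. rewrite Rmult_assoc, Rinv_l; lra.
Qed.

Lemma div_floor_S_le (m : nat) : (1 <= m)%nat -> (div_floor x (S m) <= div_floor x m)%nat.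
Proof.
  intros Hm. apply le_floor_nat.
  destruct (div_floor_spec (S m) ltac:(lia)) as [Hle _]. eapply Rle_trans; [exact Hle|].
  apply Rmult_le_compat_l; [exact Hx|].
  apply Rinv_le_contravar; [apply lt_0_INR; lia | apply le_INR; lia].
Qed.

Lemma floor_div_eq_of_range (m n : nat) : (1 <= m)%nat ->
  (div_floor x (S m) < n <= div_floor x m)%nat -> floor_nat (x / INR n) = m.
Proof.
  intros Hm [Hlo Hhi].
  assert (Hm0 : 0 < INR m) by (apply lt_0_INR; lia).
  assert (Hn0 : 0 < INR n) by (apply lt_0_INR; lia).
  destruct (div_floor_spec m Hm) as [Hq _].
  destruct (div_floor_spec (S m) ltac:(lia)) as [_ HqS].
  apply le_INR in Hhi. apply le_INR in Hlo. rewrite S_INR in Hlo, HqS.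
  assert (Hnm : INR n * INR m <= x).
  { apply (Rmult_le_compat_r (INR m)) in Hhi; [|lra].
    unfold Rdiv in Hq. apply Rmult_le_compat_r with (r := INR m) in Hq; [|lra].
    rewrite Rmult_assoc, Rinv_l, Rmult_1_r in Hq by lra. lra. }
  assert (HnS : x < INR n * (INR m + 1)).
  { apply Rmult_lt_compat_r with (r := INR m + 1) in HqS; [|lra].
    unfold Rdiv in HqS. rewrite Rmult_assoc, Rinv_l, Rmult_1_r in HqS by lra. nra. }
  apply floor_nat_unique. split.
  - apply Rmult_le_reg_r with (INR n); [exact Hn0|].
    unfold Rdiv. rewrite Rmult_assoc, Rinv_l by lra. lra.
  - apply Rmult_lt_reg_r with (INR n); [exact Hn0|].
    unfold Rdiv. rewrite Rmult_assoc, Rinv_l by lra. lra.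
Qed.

Lemma S_sum_by_quotients : S_sum x =
  sum_n_m (fun m => (INR (div_floor x m) - INR (div_floor x (S m))) * mangoldt_pair m)
    1 (floor_nat x).
Proof.
  change (sum_n_m (fun n => mangoldt_pair (div_floor x n)) 1 (floor_nat x) =
    sum_n_m (fun m => (INR (div_floor x m) - INR (div_floor x (S m))) * mangoldt_pair m)
      1 (floor_nat x)).
  pose proof (sum_n_m_blocks (fun n => mangoldt_pair (div_floor x n)) (div_floor x) (floor_nat x)
    (fun m Hm => div_floor_S_le m (proj1 Hm))) as Hblocks.
  rewrite div_floor_S_floor, div_floor_1 in Hblocks. rewrite Hblocks.
  apply sum_n_m_ext_loc. intros m Hm.
  pose proof (div_floor_S_le m (proj1 Hm)).
  rewrite (sum_n_m_ext_loc _ (fun _ => mangoldt_pair m)).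
  - rewrite sum_n_m_const, minus_INR, !S_INR by lia. apply Rmult_eq_compat_r. ring.
  - intros n Hn. unfold div_floor at 1.
    rewrite (floor_div_eq_of_range m n); [reflexivity | lia | lia].
Qed.

End Hyperbola.

Section Error.

Variable x : R.
Hypothesis Hx : 3 <= x.

Let L : R := (2 * ln x) ^ 2.

Lemma mangoldt_pair_le_sqr_2ln (m : nat) : (1 <= m)%nat -> (m <= floor_nat x)%nat ->
  mangoldt_pair m <= L.
Proof.
  intros Hm HmX. eapply Rle_trans; [apply mangoldt_pair_le_ln_sqr, Hm|].
  destruct (floor_nat_spec x ltac:(lra)) as [Hfl _].
  apply le_INR in HmX. pose proof (ln_INR_nonneg (2 * m + 1) ltac:(lia)).
  assert (H3 : ln 3 <= ln x) by (apply ln_le; lra).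
  (* [2m + 1 <= 3x <= x^2] *)
  assert (Hln : ln (INR (2 * m + 1)) <= ln (3 * x)).
  { apply ln_le; [apply lt_0_INR; lia|]. rewrite plus_INR, mult_INR. simpl INR. lra. }
  rewrite ln_mult in Hln by lra. unfold L. apply pow_incr. lra.
Qed.

Lemma block_size_approx (m : nat) : (1 <= m)%nat ->
  Rabs (INR (div_floor x m) - INR (div_floor x (S m)) - x / (INR m * (INR m + 1))) <= 1.
Proof.
  intros Hm. assert (Hm0 : 0 < INR m) by (apply lt_0_INR; lia).
  destruct (div_floor_spec x ltac:(lra) m Hm) as [Hm1 Hm2].
  destruct (div_floor_spec x ltac:(lra) (S m) ltac:(lia)) as [HS1 HS2].
  rewrite S_INR in HS1, HS2.
  replace (x / (INR m * (INR m + 1))) with (x / INR m - x / (INR m + 1)) by (field; lra).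
  apply Rabs_le. lra.
Qed.

Lemma head_sum_approx (N : nat) : (1 <= N)%nat -> (N <= floor_nat x)%nat ->
  Rabs (sum_n_m (fun m => (INR (div_floor x m) - INR (div_floor x (S m))) * mangoldt_pair m)
          1 N - x * s1_partial N) <= INR N * L.
Proof.
  intros HN HNx. unfold s1_partial.
  rewrite <- sum_n_m_Rmult_l.
  replace (INR N) with (INR (S N - 1)) by (f_equal; lia).
  apply sum_n_m_abs_sub_le. intros m Hm.
  assert (Hm0 : 0 < INR m) by (apply lt_0_INR; lia).
  rewrite s1_term_eq.
  replace (_ * mangoldt_pair m - x * (mangoldt_pair m / (INR m * (INR m + 1))))
    with ((INR (div_floor x m) - INR (div_floor x (S m)) - x / (INR m * (INR m + 1)))
          * mangoldt_pair m) by (field; lra).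
  rewrite Rabs_mult, (Rabs_pos_eq (mangoldt_pair m)) by apply mangoldt_pair_nonneg.
  rewrite <- (Rmult_1_l L). apply Rmult_le_compat.
  - apply Rabs_pos.
  - apply mangoldt_pair_nonneg.
  - apply block_size_approx. lia.
  - apply mangoldt_pair_le_sqr_2ln; lia.
Qed.

Lemma tail_sum_bound (N : nat) : (N <= floor_nat x)%nat ->
  0 <= sum_n_m (fun m => (INR (div_floor x m) - INR (div_floor x (S m))) * mangoldt_pair m)
         (S N) (floor_nat x) <= L * (x / INR (S N)).
Proof.
  intros HNx.
  assert (Hblock : forall m, (S N <= m <= floor_nat x)%nat ->
            0 <= INR (div_floor x m) - INR (div_floor x (S m))).
  { intros m Hm. pose proof (le_INR _ _ (div_floor_S_le x ltac:(lra) m ltac:(lia))). lra. }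
  split.
  - apply sum_n_m_nonneg. intros m Hm.
    apply Rmult_le_pos; [apply Hblock, Hm | apply mangoldt_pair_nonneg].
  - eapply Rle_trans.
    { apply (sum_n_m_le_loc _ (fun m => L * (INR (div_floor x m) - INR (div_floor x (S m))))).
      intros m Hm. rewrite (Rmult_comm L). apply Rmult_le_compat_l; [apply Hblock, Hm|].
      apply mangoldt_pair_le_sqr_2ln; lia. }
    rewrite sum_n_m_Rmult_l.
    rewrite (sum_n_m_telescope (fun m => INR (div_floor x m))) by lia.
    rewrite div_floor_S_floor by lra. simpl INR. rewrite Rminus_0_r.
    apply Rmult_le_compat_l; [unfold L; apply pow2_ge_0|].
    apply (div_floor_spec x ltac:(lra) (S N)). lia.
Qed.

Lemma S_sum_approx (N : nat) (s1 : R) : (1 <= N)%nat -> (N <= floor_nat x)%nat ->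
  s1_partial N <= s1 <= s1_partial N + 56 / sqrt (INR (S N)) ->
  Rabs (S_sum x - s1 * x) <= INR N * L + L * (x / INR (S N)) + 56 * x / sqrt (INR (S N)).
Proof.
  intros HN HNx Hs1.
  rewrite S_sum_by_quotients by lra.
  rewrite (sum_n_m_Chasles _ 1 N (floor_nat x)) by lia. change plus with Rplus.
  pose proof (head_sum_approx N HN HNx) as Hhead. apply Rabs_le_between in Hhead.
  pose proof (tail_sum_bound N HNx) as Htail.
  assert (Hs1x : s1_partial N * x <= s1 * x <= s1_partial N * x + 56 * x / sqrt (INR (S N))).
  { set (e := 56 / sqrt (INR (S N))) in Hs1.
    replace (56 * x / sqrt (INR (S N))) with (e * x) by (unfold e, Rdiv; ring).
    split; [|rewrite <- Rmult_plus_distr_r]; apply Rmult_le_compat_r; lra. }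
  apply Rabs_le. lra.
Qed.

End Error.

Lemma S_sum_error_le (x s1 : R) : 3 <= x ->
  (forall N, (1 <= N)%nat -> s1_partial N <= s1 <= s1_partial N + 56 / sqrt (INR (S N))) ->
  Rabs (S_sum x - s1 * x) <= 64 * (Rpower x (2 / 3) * ln x ^ 2).
Proof.
  intros Hx Hs1.
  (* cut the sum at [N = [x^(2/3)]], writing [x = t^3] *)
  set (t := Rpower x (1 / 3)).
  assert (Ht0 : 0 < t) by apply exp_pos.
  assert (Ht3 : t * t * t = x).
  { unfold t. rewrite <- !Rpower_plus. replace (1 / 3 + 1 / 3 + 1 / 3) with 1 by field.
    apply Rpower_1. lra. }
  assert (Ht2 : t * t = Rpower x (2 / 3)).
  { unfold t. rewrite <- Rpower_plus. f_equal. field. }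
  assert (Ht1 : 1 <= t).
  { unfold t. rewrite <- (Rpower_O x) at 1 by lra. apply Rle_Rpower; lra. }
  set (N := floor_nat (t * t)).
  destruct (floor_nat_spec (t * t) ltac:(nra)) as [HN_le HN_gt]. fold N in HN_le, HN_gt.
  assert (HN1 : (1 <= N)%nat) by (apply le_floor_nat; simpl; nra).
  assert (HNx : (N <= floor_nat x)%nat) by (apply le_floor_nat; nra).
  pose proof (S_sum_approx x Hx N s1 HN1 HNx (Hs1 N HN1)) as Happrox.
  rewrite <- Ht2. pose proof (ln_ge_1 x Hx) as Hl. set (l := ln x) in *.
  assert (HSN : t * t < INR (S N)) by (rewrite S_INR; lra).
  assert (Hsqrt : t <= sqrt (INR (S N))).
  { rewrite <- (sqrt_square t) by lra. apply sqrt_le_1_alt. lra. }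
  assert (Hdiv : x / INR (S N) <= t).
  { apply Rmult_le_reg_r with (INR (S N)); [nra|].
    unfold Rdiv. rewrite Rmult_assoc, Rinv_l by nra. nra. }
  assert (Hdiv_sqrt : 56 * x / sqrt (INR (S N)) <= 56 * (t * t)).
  { apply Rmult_le_reg_r with (sqrt (INR (S N))); [lra|].
    unfold Rdiv. rewrite Rmult_assoc, Rinv_l by lra. nra. }
  assert (Hl2 : 1 <= l ^ 2) by nra.
  eapply Rle_trans; [exact Happrox|].
  replace ((2 * l) ^ 2) with (4 * l ^ 2) by ring.
  assert (HNl : INR N * (4 * l ^ 2) <= t * t * (4 * l ^ 2)) by (apply Rmult_le_compat_r; nra).
  assert (Hxl : 4 * l ^ 2 * (x / INR (S N)) <= 4 * l ^ 2 * (t * t))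
    by (apply Rmult_le_compat_l; nra).
  nra.
Qed.

Theorem theorem12p2 :
  exists s1 : R,
    is_series (fun n : nat => s1_term (S n)) s1 /\
    620794 / 1000000 <= s1 /\
    forall eps : R, 0 < eps ->
      exists C x0 : R, forall x : R, x0 <= x ->
        Rabs (S_sum x - s1 * x) <=
          C * (Rpower x ((2 + eps) / 3) * (ln x) ^ 2).
Proof.
  destruct s1_series_bounds as [s1 [Hseries Hbounds]].
  exists s1. split; [exact Hseries|]. split.
  - pose proof s1_partial_11_ge. pose proof (Hbounds 11%nat ltac:(lia)). lra.
  - intros eps Heps. exists 64, 3. intros x Hx.
    eapply Rle_trans; [exact (S_sum_error_le x s1 Hx Hbounds)|].
    apply Rmult_le_compat_l; [lra|]. apply Rmult_le_compat_r; [apply pow2_ge_0|].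
    apply Rle_Rpower; lra.
Qed.
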